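(* Let $\varepsilon>0$ and let $G$ be an $n$-vertex graph with $e(G)\geq 2n/\varepsilon$. Then there exists a set $\mathcal{M}$ of edge-disjoint matchings in $G$ such that (M1) $|\mathcal{M}|\leq 2n$; (M2) $\left|E(G)\setminus\bigcup_{M\in\mathcal{M}}M\right|\leq 2\varepsilon e(G)$; and (M3) $|M|\geq\frac{\varepsilon e(G)}{2n}$ for every $M\in\mathcal{M}$.
   Context: A matching is a set of pairwise vertex-disjoint edges; $e(G)$ is the number of edges of $G$. *)

From mathcomp Require Import all_boot all_order all_algebra.
Set Implicit Arguments. Unset Strict Implicit. Unset Printing Implicit Defensive.

(* A (simple) graph on vertex set 'I_n is given by its edge set:
   a set of 2-element subsets of 'I_n. *)
Definition simple_graph (n : nat) (E : {set {set 'I_n}}) : bool :=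
  [forall e in E, #|e| == 2].

Definition matching (n : nat) (M : {set {set 'I_n}}) : bool :=
  [forall e in M, forall f in M, (e != f) ==> [disjoint e & f]].

Definition matching_in (n : nat) (E M : {set {set 'I_n}}) : bool :=
  (M \subset E) && matching M.

Definition edge_disjoint_matchings (n : nat) (E : {set {set 'I_n}})
  (MM : {set {set {set 'I_n}}}) : bool :=
  [forall M in MM, matching_in E M] &&
  [forall M in MM, forall M' in MM, (M != M') ==> [disjoint M & M']].

(* Colour the edge {x, y} of a graph on 'I_n by (x + y) mod n.  Two edges of
   the same colour sharing the vertex x have the same other end, so the n
   colour classes are edge-disjoint matchings covering E.  Keep the classes of
   size at least t = eps e(G) / (2n): the discarded ones, at most n of them,
   contain fewer than n t = eps e(G) / 2 edges in total. *)

From mathcomp Require Import all_boot all_order all_algebra.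
From mathcomp Require Import lra.

Set Implicit Arguments.
Unset Strict Implicit.
Unset Printing Implicit Defensive.

Import Order.TTheory GRing.Theory Num.Theory.
Local Open Scope ring_scope.

Lemma cards2_set1U (T : finType) (e : {set T}) (x : T) :
  #|e| = 2%N -> x \in e -> exists2 y, y != x & e = [set x; y].
Proof.
move=> /eqP /cards2P [a [b [ab ->]]]; rewrite !inE => /orP[] /eqP ->.
- by exists b; rewrite 1?eq_sym.
- by exists a; rewrite 1?setUC.
Qed.

Lemma mulrn_divn_le (R : numFieldType) (x : R) (n : nat) :
  0 <= x -> x / n%:R *+ n <= x.
Proof.
case: n => [|n] x_ge0; first by rewrite mulr0n.
by rewrite -mulr_natr divfK ?pnatr_eq0.
Qed.

Section LargeSets.

Variables (R : realDomainType) (T : finType).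

Definition large_sets (P : {set {set T}}) (t : R) : {set {set T}} :=
  [set A in P | t <= #|A|%:R].

Lemma large_sets_sub P t : large_sets P t \subset P.
Proof. by apply/subsetP => A; rewrite inE => /andP[]. Qed.

Lemma card_uncovered_large_sets (E : {set T}) P t :
  0 <= t -> E \subset cover P ->
  #|E :\: cover (large_sets P t)|%:R <= t *+ #|P|.
Proof.
move=> t_ge0 sub_cover.
pose small := [set A in P | #|A|%:R < t].
have sub_small : E :\: cover (large_sets P t) \subset cover small.
  apply/subsetP => e /setDP [eE not_large].
  have /bigcupP [A AP eA] := subsetP sub_cover e eE.
  apply/bigcupP; exists A => //; rewrite /small inE AP ltNge /=.
  by apply: contraNN not_large => tA; apply/bigcupP; exists A; rewrite ?inE ?AP.
have card_small : (#|small| <= #|P|)%N.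
  by apply/subset_leq_card/subsetP => A; rewrite inE => /andP[].
apply: le_trans (_ : (\sum_(A in small) #|A|)%:R <= _).
  by rewrite ler_nat (leq_trans (subset_leq_card sub_small)) ?leq_card_cover.
rewrite natr_sum (le_trans (_ : _ <= \sum_(A in small) t)) //.
  by apply: ler_sum => A; rewrite inE => /andP[_ /ltW].
by rewrite sumr_const ler_wpMn2l.
Qed.

End LargeSets.

Section ColourClasses.

Variables (n : nat) (E : {set {set 'I_n}}).

Definition edge_colour (e : {set 'I_n}) : nat := ((\sum_(i in e) i) %% n)%N.

Definition colour_class (k : 'I_n) : {set {set 'I_n}} :=
  [set e in E | edge_colour e == k].

Definition colour_classes : {set {set {set 'I_n}}} :=
  [set colour_class k | k : 'I_n].

Lemma edge_colour_set2 (x y : 'I_n) :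
  y != x -> edge_colour [set x; y] = ((x + y) %% n)%N.
Proof. by move=> yx; rewrite /edge_colour big_setU1 ?big_set1 // inE eq_sym. Qed.

Lemma card_colour_classes : (#|colour_classes| <= n)%N.
Proof. by rewrite (leq_trans (leq_imset_card _ _)) ?card_ord. Qed.

Hypothesis simpleE : simple_graph E.

Lemma card_edge e : e \in E -> #|e| = 2%N.
Proof. by move=> eE; apply/eqP; apply: (forall_inP simpleE). Qed.

Lemma colour_class_matching k : matching_in E (colour_class k).
Proof.
apply/andP; split; first by apply/subsetP => e; rewrite inE => /andP[].
apply/forallP => e; apply/implyP; rewrite inE => /andP[eE /eqP colour_e].
apply/forallP => f; apply/implyP; rewrite inE => /andP[fE /eqP colour_f].
apply/implyP; apply: contraR => /pred0Pn [x /andP[xe xf]].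
have [y yx e_xy] := cards2_set1U (card_edge eE) xe.
have [z zx f_xz] := cards2_set1U (card_edge fE) xf.
subst e f.
move: colour_e colour_f; rewrite !edge_colour_set2 // => colour_e colour_f.
have /eqP : (x + y = x + z %[mod n])%N by rewrite colour_e colour_f.
by rewrite eqn_modDl !modn_small // => /eqP /val_inj ->.
Qed.

Lemma colour_classes_disjoint k l :
  colour_class k != colour_class l ->
  [disjoint colour_class k & colour_class l].
Proof.
apply: contraR => /pred0Pn [e /andP[]]; rewrite !inE.
move=> /andP[_ /eqP colour_k] /andP[_ /eqP colour_l].
by have -> : k = l by apply: val_inj; rewrite /= -colour_k -colour_l.
Qed.

Lemma edge_disjoint_colour_classes (MM : {set {set {set 'I_n}}}) :
  MM \subset colour_classes -> edge_disjoint_matchings E MM.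
Proof.
move=> /subsetP MM_sub; apply/andP; split; apply/forall_inP => M /MM_sub.
  by case/imsetP => k _ ->; apply: colour_class_matching.
case/imsetP => k _ ->; apply/forall_inP => M' /MM_sub /imsetP [l _ ->].
by apply/implyP; apply: colour_classes_disjoint.
Qed.

Lemma cover_colour_classes : E \subset cover colour_classes.
Proof.
apply/subsetP => e eE.
have /eqP /cards2P [v _] := card_edge eE.
have n_gt0 : (0 < n)%N := leq_ltn_trans (leq0n v) (ltn_ord v).
apply/bigcupP; exists (colour_class (Ordinal (ltn_pmod (\sum_(i in e) i)%N n_gt0)));
  first exact: imset_f.
by rewrite inE eE /edge_colour /=.
Qed.

End ColourClasses.

Theorem corollary21 (R : realFieldType) (eps : R) (n : nat)
  (E : {set {set 'I_n}}) :
  0 < eps -> simple_graph E ->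
  2 * n%:R / eps <= #|E|%:R ->
  exists MM : {set {set {set 'I_n}}},
    [/\ edge_disjoint_matchings E MM,
        (#|MM| <= 2 * n)%N,
        #|E :\: \bigcup_(M in MM) M|%:R <= 2 * eps * #|E|%:R
      & forall M, M \in MM -> eps * #|E|%:R / (2 * n%:R) <= #|M|%:R].
Proof.
move=> eps_gt0 simpleE _.
have epsE_ge0 : 0 <= eps * #|E|%:R by rewrite mulr_ge0 // ltW.
set t := eps * #|E|%:R / (2 * n%:R).
have t_ge0 : 0 <= t by rewrite divr_ge0 // mulr_ge0.
have nt_le : t *+ n <= eps * #|E|%:R / 2.
  by rewrite /t invfM mulrA mulrn_divn_le ?divr_ge0.
exists (large_sets (colour_classes E) t); split.
- exact/edge_disjoint_colour_classes/large_sets_sub.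
- rewrite (leq_trans (subset_leq_card (large_sets_sub _ _))) //.
  by rewrite (leq_trans (card_colour_classes E)) // leq_pmull.
- apply: le_trans (card_uncovered_large_sets t_ge0 (cover_colour_classes simpleE)) _.
  apply: le_trans (ler_wpMn2l t_ge0 (card_colour_classes E)) _.
  lra.
- by move=> M; rewrite inE => /andP[].
Qed.
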